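(* Let $x\in\{0,1\}^\infty$ have randomness rate $\tau>0$, let $0<\sigma<\tau$, let $0<\sigma'<\tau-\sigma$, and let $b=\lceil (1-\sigma)/\sigma'\rceil$. Let $a$ be a sufficiently large positive integer, and define $t_0=0$, $t_1=a$, and $t_i=b(t_1+\cdots+t_{i-1})$ for $i\ge2$. Put $x_i=x(t_{i-1}+1:t_i)$, $n_i=|x_i|=t_i-t_{i-1}$, and $\bar{x}_i=x_1x_2\cdots x_i=x(1:t_i)$ for $i\ge1$. Then: (1) $K(x_i\mid\bar{x}_{i-1})>\sigma n_i$ for all $i\ge2$; (2) $\log|x_i|=\Theta(i)$ and $\log|\bar{x}_i|=\Theta(i)$ as $i\to\infty$.
   Context: $x(n_1:n_2)$ denotes bits $n_1$ through $n_2$ of $x$ (indexed from 1); juxtaposition is concatenation. $K(u)$ and $K(u\mid v)$ denote plain and conditional plain Kolmogorov complexity with respect to fixed universal machines. A sequence $x$ has randomness rate $\tau$ if $K(x(1:n))\ge\tau n$ for all but finitely many $n$. ''Sufficiently large'' means: there is $a_0$ (depending on $x,\tau,\sigma,\sigma'$) such that the conclusion holds for every $a\ge a_0$. *)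

From Stdlib Require Import Reals Lra Lia List.
Import ListNotations.
Open Scope R_scope.

Inductive code : Type :=
| CZero : code
| CSucc : code
| CProj : nat -> code               (* i-th argument (0-indexed) *)
| CComp : code -> list code -> code
| CPrec : code -> code -> code      (* primitive recursion on the first argument *)
| CMu   : code -> code.             (* minimisation on the first argument *)

Inductive eval : code -> list nat -> nat -> Prop :=
| eZero v : eval CZero v 0
| eSucc x v : eval CSucc (x :: v) (S x)
| eProj i v : (i < length v)%nat -> eval (CProj i) v (nth i v 0%nat)
| eComp f gs v ws y : evals gs v ws -> eval f ws y -> eval (CComp f gs) v y
| ePrec0 f g v y : eval f v y -> eval (CPrec f g) (0%nat :: v) y
| ePrecS f g n v r y :
    eval (CPrec f g) (n :: v) r -> eval g (n :: r :: v) y ->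
    eval (CPrec f g) (S n :: v) y
| eMu f v n :
    eval f (n :: v) 0 ->
    (forall m, (m < n)%nat -> exists k, eval f (m :: v) (S k)) ->
    eval (CMu f) v n
with evals : list code -> list nat -> list nat -> Prop :=
| esNil v : evals [] v []
| esCons g gs v w ws : eval g v w -> evals gs v ws -> evals (g :: gs) v (w :: ws).

(* bijective encoding of binary strings as natural numbers *)
Fixpoint enc (s : list bool) : nat :=
  match s with
  | [] => 0%nat
  | b :: s' => S (2 * enc s' + (if b then 1 else 0))
  end.

Definition runs1 (M : code) (p x : list bool) : Prop := eval M [enc p] (enc x).

Definition runs2 (M : code) (p y x : list bool) : Prop := eval M [enc p; enc y] (enc x).

Definition universal1 (U : code) : Prop :=
  forall M : code, exists c : nat, forall p x, runs1 M p x ->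
    exists q, runs1 U q x /\ (length q <= length p + c)%nat.

Definition universal2 (U : code) : Prop :=
  forall M : code, exists c : nat, forall p y x, runs2 M p y x ->
    exists q, runs2 U q y x /\ (length q <= length p + c)%nat.

(* Plain complexity K_U(x) = min { |p| : U(p) = x } (= +oo if empty).
   [r <= K U x]  and  [r < K(x|y)] written out over descriptions. *)
Definition K_ge (U : code) (x : list bool) (r : R) : Prop :=
  forall p, runs1 U p x -> r <= INR (length p).

Definition Kc_gt (U : code) (x y : list bool) (r : R) : Prop :=
  forall p, runs2 U p y x -> r < INR (length p).

(* x : infinite binary sequence, bit number k (indexed from 1) is x (k-1).
   seg x n1 n2 = x(n1:n2) = bits n1..n2 *)
Definition seg (x : nat -> bool) (n1 n2 : nat) : list bool :=
  map (fun k => x (k - 1)%nat) (seq n1 (n2 + 1 - n1)).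

Definition has_rate (U : code) (x : nat -> bool) (tau : R) : Prop :=
  exists N : nat, forall n : nat, (N <= n)%nat -> K_ge U (seg x 1 n) (tau * INR n).

(* Suppose a program p with |p| <= sigma n_i printed x_i from the condition xbar_{i-1}.  A
   machine reading a self-delimiting copy of xbar_{i-1} followed by p prints xbar_i, so
   K(xbar_i) <= t_{i-1} + sigma n_i + O(log t_i) = sigma t_i + (1 - sigma) t_{i-1} + O(log t_i).
   As t_i >= b t_{i-1} and b sigma' >= 1 - sigma, this is at most (sigma + sigma') t_i + O(log t_i),
   which is below tau t_i once a (hence t_i) is large: a contradiction with the randomness rate.
   For the growth claims, n_i = a b^2 (b+1)^(i-3) and t_i = a b (b+1)^(i-2) are geometric. *)

From Stdlib Require Import Reals List.
Open Scope R_scope.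
From Stdlib Require Import Lra Lia Arith.
Import ListNotations.

Local Open Scope nat_scope.

Lemma eval_comp1 f g v w y : eval g v w -> eval f [w] y -> eval (CComp f [g]) v y.
Proof. intros; econstructor; [econstructor; [eassumption | constructor] | eassumption]. Qed.

Lemma eval_comp2 f g1 g2 v w1 w2 y :
  eval g1 v w1 -> eval g2 v w2 -> eval f [w1; w2] y -> eval (CComp f [g1; g2]) v y.
Proof.
  intros; econstructor; [econstructor; [eassumption | econstructor; [eassumption | constructor]]
                        | eassumption].
Qed.

Lemma eval_proj i v y : i < length v -> nth i v 0 = y -> eval (CProj i) v y.
Proof. intros H <-; constructor; exact H. Qed.

Ltac solve_proj := apply eval_proj; simpl; [lia | reflexivity].

(* [n mod 2] and [n / 2], written with the primitive recursion that [prog_parity] and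
   [prog_half] below follow. *)
Fixpoint parity n := match n with 0 => 0 | S n => 1 - parity n end.
Fixpoint half n := match n with 0 => 0 | S n => half n + parity n end.

Lemma parity_half_double e r : r <= 1 -> parity (2 * e + r) = r /\ half (2 * e + r) = e.
Proof.
  intro Hr; induction e as [|e [IHp IHh]].
  - destruct r as [|[|]]; simpl; lia.
  - replace (2 * S e + r) with (S (S (2 * e + r))) by lia; cbn [parity half].
    rewrite IHp, IHh; lia.
Qed.

(* Arithmetic decoding of [enc s]: since [enc (c :: s) = S (2 * enc s + c)], the head bit of
   [s] is [parity (pred (enc s))] and the code of its tail is [half (pred (enc s))]. *)
Definition dec_tail N := half (Nat.pred N).
Fixpoint dec_drop j N := match j with 0 => N | S j => dec_tail (dec_drop j N) end.
Definition dec_bit j N := parity (Nat.pred (dec_drop j N)).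

(* [enc w = \sum_j (1 + w_j) 2^j]; [undouble k N] rebuilds it from the bits at the even
   positions [0, 2, ..., 2k - 2] of the string coded by [N]. *)
Fixpoint undouble k N := match k with 0 => 0 | S k => undouble k N + S (dec_bit (k + k) N) * 2 ^ k end.

(* On [doubled w ++ r] the [k]-th pair of bits is [c; c] for [k < |w|], so [marker k] is 1 there;
   it vanishes at the end marker [false; true]. *)
Definition marker k N := dec_bit (k + k) N + (1 - dec_bit (S (k + k)) N).

Definition prog_one := CComp CSucc [CZero].
Definition prog_add := CPrec (CProj 0) (CComp CSucc [CProj 1]).
Definition prog_mul := CPrec CZero (CComp prog_add [CProj 1; CProj 2]).
Definition prog_pred := CPrec CZero (CProj 0).
Definition prog_subr := CPrec (CProj 0) (CComp prog_pred [CProj 1]).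
Definition prog_sub := CComp prog_subr [CProj 1; CProj 0].
Definition prog_parity := CPrec CZero (CComp prog_sub [prog_one; CProj 1]).
Definition prog_half := CPrec CZero (CComp prog_add [CProj 1; CComp prog_parity [CProj 0]]).
Definition prog_tail := CComp prog_half [CComp prog_pred [CProj 0]].
Definition prog_drop := CPrec (CProj 0) (CComp prog_tail [CProj 1]).
Definition prog_bit := CComp prog_parity [CComp prog_pred [prog_drop]].
Definition prog_pow2 := CPrec prog_one (CComp prog_add [CProj 1; CProj 1]).
Definition prog_double := CComp prog_add [CProj 0; CProj 0].
Definition prog_undouble := CPrec CZero (CComp prog_add [CProj 1; CComp prog_mul
  [CComp CSucc [CComp prog_bit [CComp prog_double [CProj 0]; CProj 2]]; CComp prog_pow2 [CProj 0]]]).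
Definition prog_marker := CComp prog_add [CComp prog_bit [prog_double; CProj 1];
  CComp prog_sub [prog_one; CComp prog_bit [CComp CSucc [prog_double]; CProj 1]]].

Lemma eval_one v : eval prog_one v 1.
Proof. eapply eval_comp1; constructor. Qed.

Lemma eval_add m n v : eval prog_add (m :: n :: v) (m + n).
Proof.
  induction m; simpl.
  - apply ePrec0; solve_proj.
  - eapply ePrecS; [exact IHm | eapply eval_comp1; [solve_proj | constructor]].
Qed.

Lemma eval_mul m n v : eval prog_mul (m :: n :: v) (m * n).
Proof.
  induction m.
  - apply ePrec0; constructor.
  - replace (S m * n) with (m * n + n) by lia.
    eapply ePrecS; [exact IHm | eapply eval_comp2; [solve_proj | solve_proj | apply eval_add]].
Qed.

Lemma eval_pred n v : eval prog_pred (n :: v) (Nat.pred n).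
Proof.
  induction n; simpl; [apply ePrec0; constructor | eapply ePrecS; [exact IHn | solve_proj]].
Qed.

Lemma eval_subr n m v : eval prog_subr (n :: m :: v) (m - n).
Proof.
  induction n.
  - rewrite Nat.sub_0_r; apply ePrec0; solve_proj.
  - replace (m - S n) with (Nat.pred (m - n)) by lia.
    eapply ePrecS; [exact IHn | eapply eval_comp1; [solve_proj | apply eval_pred]].
Qed.

Lemma eval_sub m n v : eval prog_sub (m :: n :: v) (m - n).
Proof. eapply eval_comp2; [solve_proj | solve_proj | apply eval_subr]. Qed.

Lemma eval_parity n v : eval prog_parity (n :: v) (parity n).
Proof.
  induction n; [apply ePrec0; constructor |].
  eapply ePrecS; [exact IHn | eapply eval_comp2; [apply eval_one | solve_proj | apply eval_sub]].
Qed.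

Lemma eval_half n v : eval prog_half (n :: v) (half n).
Proof.
  induction n; [apply ePrec0; constructor |].
  eapply ePrecS; [exact IHn | eapply eval_comp2; [solve_proj | | apply eval_add]].
  eapply eval_comp1; [solve_proj | apply eval_parity].
Qed.

Lemma eval_tail N v : eval prog_tail (N :: v) (dec_tail N).
Proof. eapply eval_comp1; [eapply eval_comp1; [solve_proj | apply eval_pred] | apply eval_half]. Qed.

Lemma eval_drop j N v : eval prog_drop (j :: N :: v) (dec_drop j N).
Proof.
  induction j; [apply ePrec0; solve_proj |].
  eapply ePrecS; [exact IHj | eapply eval_comp1; [solve_proj | apply eval_tail]].
Qed.

Lemma eval_bit j N v : eval prog_bit (j :: N :: v) (dec_bit j N).
Proof.
  eapply eval_comp1; [eapply eval_comp1; [apply eval_drop | apply eval_pred] | apply eval_parity].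
Qed.

Lemma eval_pow2 n v : eval prog_pow2 (n :: v) (2 ^ n).
Proof.
  induction n; [apply ePrec0, eval_one |].
  replace (2 ^ S n) with (2 ^ n + 2 ^ n) by (simpl; lia).
  eapply ePrecS; [exact IHn | eapply eval_comp2; [solve_proj | solve_proj | apply eval_add]].
Qed.

Lemma eval_double k v : eval prog_double (k :: v) (k + k).
Proof. eapply eval_comp2; [solve_proj | solve_proj | apply eval_add]. Qed.

Lemma eval_undouble k N v : eval prog_undouble (k :: N :: v) (undouble k N).
Proof.
  induction k; [apply ePrec0; constructor |].
  eapply ePrecS; [exact IHk | eapply eval_comp2; [solve_proj | | apply eval_add]].
  eapply eval_comp2; [| | apply eval_mul].
  - eapply eval_comp1; [| constructor].
    eapply eval_comp2; [eapply eval_comp1; [solve_proj | apply eval_double] | solve_proj | apply eval_bit].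
  - eapply eval_comp1; [solve_proj | apply eval_pow2].
Qed.

Lemma eval_marker k N v : eval prog_marker (k :: N :: v) (marker k N).
Proof.
  eapply eval_comp2; [eapply eval_comp2; [apply eval_double | solve_proj | apply eval_bit] | | apply eval_add].
  eapply eval_comp2; [apply eval_one | | apply eval_sub].
  eapply eval_comp2; [eapply eval_comp1; [apply eval_double | constructor] | solve_proj | apply eval_bit].
Qed.
Lemma enc_app s r : enc (s ++ r) = enc s + 2 ^ length s * enc r.
Proof. induction s as [|c s IH]; simpl; [lia | rewrite IH; destruct c; nia]. Qed.

Lemma dec_tail_cons c s : dec_tail (enc (c :: s)) = enc s.
Proof. unfold dec_tail; cbn [enc Nat.pred]; destruct c; apply parity_half_double; lia. Qed.

Lemma skipn_succ {A} j (s : list A) : skipn (S j) s = tl (skipn j s).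
Proof. revert j; induction s; intros [|j]; try reflexivity; exact (IHs j). Qed.

Lemma dec_drop_enc j s : dec_drop j (enc s) = enc (skipn j s).
Proof.
  induction j as [|j IH]; [reflexivity |].
  cbn [dec_drop]; rewrite IH, skipn_succ.
  destruct (skipn j s); [reflexivity | apply dec_tail_cons].
Qed.

Definition head_bit (s : list bool) := match s with true :: _ => 1 | _ => 0 end.

Lemma dec_bit_enc j s : dec_bit j (enc s) = head_bit (skipn j s).
Proof.
  unfold dec_bit; rewrite dec_drop_enc.
  destruct (skipn j s) as [|c r]; [reflexivity |].
  cbn [enc Nat.pred head_bit]; destruct c; apply parity_half_double; lia.
Qed.

Definition doubled (w : list bool) := flat_map (fun c => [c; c]) w.
Definition selfdelim (w : list bool) := doubled w ++ [false; true].

Lemma length_selfdelim w : length (selfdelim w) = length w + length w + 2.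
Proof.
  unfold selfdelim, doubled; rewrite length_app, (flat_map_constant_length (c := 2)); simpl; lia.
Qed.

Lemma skipn_doubled j w r :
  j <= length w -> skipn (j + j) (doubled w ++ r) = doubled (skipn j w) ++ r.
Proof.
  revert j; induction w as [|c w IH]; intros [|j] Hj; simpl in *; try reflexivity; try lia.
  rewrite Nat.add_succ_r; apply IH; lia.
Qed.

Lemma undouble_doubled w r : undouble (length w) (enc (doubled w ++ r)) = enc w.
Proof.
  revert r; induction w as [|c w IH] using rev_ind; intro r; [reflexivity |].
  rewrite length_app, Nat.add_1_r; cbn [undouble].
  unfold doubled at 1; rewrite flat_map_app; fold (doubled w); rewrite <- app_assoc, IH.
  rewrite dec_bit_enc, skipn_doubled by (rewrite length_app; simpl; lia).
  rewrite skipn_app, skipn_all, Nat.sub_diag, enc_app; simpl; destruct c; lia.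
Qed.

Lemma marker_selfdelim_lt m w r : m < length w -> marker m (enc (selfdelim w ++ r)) = 1.
Proof.
  intro Hm; unfold marker, selfdelim; rewrite !dec_bit_enc, skipn_succ, <- app_assoc, skipn_doubled by lia.
  destruct (skipn m w) as [|[] s] eqn:E; [| reflexivity | reflexivity].
  apply (f_equal (@length _)) in E; rewrite length_skipn in E; simpl in E; lia.
Qed.

Lemma marker_selfdelim_eq w r : marker (length w) (enc (selfdelim w ++ r)) = 0.
Proof.
  unfold marker, selfdelim; rewrite !dec_bit_enc, skipn_succ, <- app_assoc, skipn_doubled, skipn_all by lia.
  reflexivity.
Qed.

Definition prog_code_len := CMu prog_marker.
Definition prog_cond_len := CComp prog_undouble [prog_code_len; CProj 0].
Definition prog_rest :=
  CComp prog_drop [CComp CSucc [CComp CSucc [CComp prog_double [prog_code_len]]]; CProj 0].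
Definition prog_program := CComp prog_drop [prog_cond_len; prog_rest].
Definition prog_cond :=
  CComp prog_sub [prog_rest; CComp prog_mul [CComp prog_pow2 [prog_cond_len]; prog_program]].

(* On input [selfdelim w ++ y ++ p] with [enc w = |y|], run [U2] on [p] given [y] and
   output [y] followed by the result. *)
Definition prefix_machine (U2 : code) :=
  CComp prog_add [prog_cond; CComp prog_mul [CComp prog_pow2 [prog_cond_len]; CComp U2 [prog_program; prog_cond]]].

Section PrefixMachine.

Variables (w y p : list bool).
Hypothesis Hw : enc w = length y.

Let N := enc (selfdelim w ++ y ++ p).

Lemma eval_code_len : eval prog_code_len [N] (length w).
Proof.
  constructor.
  - rewrite <- (marker_selfdelim_eq w (y ++ p)); apply eval_marker.
  - intros m Hm; exists 0; rewrite <- (marker_selfdelim_lt m w (y ++ p) Hm); apply eval_marker.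
Qed.

Lemma eval_cond_len : eval prog_cond_len [N] (length y).
Proof.
  eapply eval_comp2; [apply eval_code_len | solve_proj |].
  rewrite <- Hw, <- (undouble_doubled w ([false; true] ++ y ++ p)), app_assoc.
  apply eval_undouble.
Qed.

Lemma eval_rest : eval prog_rest [N] (enc (y ++ p)).
Proof.
  eapply eval_comp2; [| solve_proj |].
  - eapply eval_comp1; [eapply eval_comp1; [eapply eval_comp1; [apply eval_code_len | apply eval_double] |] |];
      constructor.
  - replace (enc (y ++ p)) with (dec_drop (S (S (length w + length w))) N); [apply eval_drop |].
    unfold N, selfdelim; rewrite dec_drop_enc, !skipn_succ, <- app_assoc, skipn_doubled, skipn_all by lia.
    reflexivity.
Qed.

Lemma eval_program : eval prog_program [N] (enc p).
Proof.
  eapply eval_comp2; [apply eval_cond_len | apply eval_rest |].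
  replace (enc p) with (dec_drop (length y) (enc (y ++ p))); [apply eval_drop |].
  rewrite dec_drop_enc, skipn_app, skipn_all, Nat.sub_diag; reflexivity.
Qed.

Lemma eval_cond : eval prog_cond [N] (enc y).
Proof.
  eapply eval_comp2; [apply eval_rest | |].
  - eapply eval_comp2; [eapply eval_comp1; [apply eval_cond_len | apply eval_pow2] | apply eval_program
                       | apply eval_mul].
  - replace (enc y) with (enc (y ++ p) - 2 ^ length y * enc p) by (rewrite enc_app; lia).
    apply eval_sub.
Qed.

Lemma eval_prefix_machine U2 x' :
  runs2 U2 p y x' -> runs1 (prefix_machine U2) (selfdelim w ++ y ++ p) (y ++ x').
Proof.
  intro HU; eapply eval_comp2; [apply eval_cond | |].
  - eapply eval_comp2; [eapply eval_comp1; [apply eval_cond_len | apply eval_pow2] | | apply eval_mul].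
    eapply eval_comp2; [apply eval_program | apply eval_cond | exact HU].
  - rewrite enc_app; apply eval_add.
Qed.

End PrefixMachine.

Lemma enc_short_preimage L : exists w, enc w = L /\ 2 ^ length w <= L + 1.
Proof.
  induction L as [L IH] using lt_wf_ind; destruct L as [|L]; [exists []; simpl; lia |].
  pose proof (Nat.div_mod L 2 ltac:(lia)); pose proof (Nat.mod_upper_bound L 2 ltac:(lia)).
  destruct (IH (L / 2) ltac:(lia)) as [w [Hw Hlen]].
  exists (Nat.eqb (L mod 2) 1 :: w); cbn [enc length]; rewrite Nat.pow_succ_r'.
  destruct (L mod 2) as [|[|]] eqn:E; simpl; lia.
Qed.

Lemma prefix_description U1 U2 : universal1 U1 -> exists c, forall y p x', runs2 U2 p y x' ->
  exists q m, runs1 U1 q (y ++ x') /\ 2 ^ m <= length y + 1 /\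
              length q <= length p + length y + 2 * m + 2 + c.
Proof.
  intro hU1; destruct (hU1 (prefix_machine U2)) as [c Hc]; exists c.
  intros y p x' Hp; destruct (enc_short_preimage (length y)) as [w [Hw Hlen]].
  destruct (Hc _ _ (eval_prefix_machine w y p Hw U2 x' Hp)) as [q [Hq Hqlen]].
  exists q, (length w); split; [exact Hq | split; [exact Hlen |]].
  rewrite !length_app, length_selfdelim in Hqlen; lia.
Qed.

Lemma seg_length x n1 n2 : length (seg x n1 n2) = n2 + 1 - n1.
Proof. unfold seg; rewrite length_map, length_seq; reflexivity. Qed.

Lemma seg_app x S T : S <= T -> seg x 1 S ++ seg x (S + 1) T = seg x 1 T.
Proof.
  intro H; unfold seg; rewrite <- map_app; f_equal.
  replace (T + 1 - 1) with (S + (T - S)) by lia; rewrite seq_app.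
  replace (S + 1 - 1) with S by lia; replace (T + 1 - (S + 1)) with (T - S) by lia.
  do 2 f_equal; lia.
Qed.

Lemma sq_le_pow2 m : 4 <= m -> m * m <= 2 ^ m.
Proof.
  induction m as [|m IH]; intro H; [lia |].
  destruct (Nat.eq_dec m 3) as [->|]; [simpl; lia |].
  specialize (IH ltac:(lia)); rewrite Nat.pow_succ_r'; nia.
Qed.

Lemma mul_le_of_pow2_le K m T : 2 ^ m <= T + 1 -> K * m <= T + 1 + K * (K + 4).
Proof.
  intro H; destruct (le_lt_dec (Nat.max K 4) m).
  - pose proof (sq_le_pow2 m ltac:(lia)); nia.
  - nia.
Qed.

Local Open Scope R_scope.

Lemma rate_le_1 U1 x tau : universal1 U1 -> has_rate U1 x tau -> tau <= 1.
Proof.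
  intros hU [N HN]; destruct (hU (CProj 0)) as [c Hc].
  apply Rnot_lt_le; intro Hgt.
  destruct (INR_unbounded (INR c / (tau - 1))) as [n0 Hn0].
  set (n := Nat.max N n0).
  assert (Hid : runs1 (CProj 0) (seg x 1 n) (seg x 1 n)) by (apply eval_proj; simpl; lia).
  destruct (Hc _ _ Hid) as [q [Hq Hqlen]].
  pose proof (HN n ltac:(lia) q Hq) as HK.
  rewrite seg_length, Nat.add_sub in Hqlen; apply le_INR in Hqlen; rewrite plus_INR in Hqlen.
  assert (INR n0 <= INR n) by (apply le_INR; lia).
  assert ((tau - 1) * (INR c / (tau - 1)) = INR c) by (field; lra).
  nra.
Qed.

Lemma log_term_negligible d C : 0 < d -> exists T0 : nat, forall T m : nat,
  (T0 <= T)%nat -> (2 ^ m <= T + 1)%nat -> 2 * INR m + C < d * INR T.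
Proof.
  intro Hd; destruct (INR_unbounded (4 / d)) as [K HK].
  assert (HdK : 4 < d * INR K).
  { replace 4 with (d * (4 / d)) by (field; lra); apply Rmult_lt_compat_l; lra. }
  set (E := INR (K * (K + 4))).
  destruct (INR_unbounded (1 + E + 2 * Rabs C / d)) as [T0 HT0].
  exists T0; intros T m HT Hm.
  pose proof (le_INR _ _ (mul_le_of_pow2_le K m T Hm)) as HKm.
  rewrite mult_INR, !plus_INR in HKm; simpl (INR 1) in HKm; fold E in HKm.
  apply le_INR in HT; pose proof (pos_INR m); pose proof (Rle_abs C).
  assert (H4m : 4 * INR m <= d * (INR T + 1 + E)) by nra.
  assert (HTd : d * (1 + E) + 2 * Rabs C < d * INR T).
  { replace (d * (1 + E) + 2 * Rabs C) with (d * (1 + E + 2 * Rabs C / d)) by (field; lra).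
    apply Rmult_lt_compat_l; lra. }
  lra.
Qed.

Lemma ln_le_of_le a b : 0 < a -> a <= b -> ln a <= ln b.
Proof. intros Ha [Hab | ->]; [left; apply ln_increasing |]; lra. Qed.

Definition ln_theta (f : nat -> R) : Prop :=
  exists c1 c2 : R, exists N : nat, 0 < c1 /\ 0 < c2 /\
    forall i, (N <= i)%nat -> c1 * INR i <= ln (f i) <= c2 * INR i.

Lemma ln_theta_geometric (f : nat -> R) A B d : 1 <= A -> 2 <= B ->
  (forall i, (d <= i)%nat -> f i = A * B ^ (i - d)) -> ln_theta f.
Proof.
  intros HA HB Hf.
  assert (Hl2 : 0 < ln 2) by (rewrite <- ln_1; apply ln_increasing; lra).
  assert (HlB : ln 2 <= ln B) by (apply ln_le_of_le; lra).
  assert (HlA : 0 <= ln A) by (rewrite <- ln_1; apply ln_le_of_le; lra).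
  exists (ln 2 / 2), (ln A + ln B + 1), (2 * d + 1)%nat; split; [lra | split; [lra |]].
  intros i Hi; rewrite Hf, ln_mult, ln_pow, minus_INR by (try apply pow_lt; lra || lia).
  assert (Hi' : 2 * INR d + 1 <= INR i).
  { replace (2 * INR d + 1) with (INR (2 * d + 1)) by (rewrite plus_INR, mult_INR; reflexivity).
    apply le_INR; exact Hi. }
  pose proof (pos_INR d); split; nra.
Qed.

Lemma Kc_gt_of_rate U1 U2 x tau sigma sigma' :
  universal1 U1 -> has_rate U1 x tau -> 0 < tau - sigma - sigma' ->
  exists T0 : nat, forall S T : nat, (T0 <= T)%nat -> (S <= T)%nat ->
    (1 - sigma) * INR S <= sigma' * INR T ->
    Kc_gt U2 (seg x (S + 1) T) (seg x 1 S) (sigma * INR (T - S)).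
Proof.
  intros hU1 [Nr hNr] hgap.
  destruct (prefix_description U1 U2 hU1) as [c hc].
  destruct (log_term_negligible _ (INR c + 2) hgap) as [A hA].
  exists (Nat.max A Nr); intros S T hT hST hS p hp.
  apply Rnot_le_lt; intro hshort.
  destruct (hc _ _ _ hp) as [q [m [hq [hm hqlen]]]].
  rewrite seg_app in hq by exact hST.
  rewrite seg_length, Nat.add_sub in hm, hqlen.
  pose proof (hNr T ltac:(lia) q hq) as hK.
  pose proof (hA T m ltac:(lia) ltac:(lia)) as hlog.
  apply le_INR in hqlen; rewrite !plus_INR, mult_INR in hqlen.
  rewrite minus_INR in hshort by exact hST; simpl (INR 2) in hqlen.
  lra.
Qed.

Section Schedule.

Local Open Scope nat_scope.

Variables (a b : nat) (t : nat -> nat).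
Hypothesis ht1 : t 1 = a.
Hypothesis hrec : forall i, 2 <= i -> t i = b * list_sum (map t (seq 1 (i - 1))).

Lemma schedule_sum j : list_sum (map t (seq 1 (S j))) = a * (b + 1) ^ j.
Proof.
  induction j as [|j IH]; [simpl; lia |].
  rewrite seq_S, map_app, list_sum_app, IH; simpl.
  rewrite (hrec (S (S j))), Nat.sub_succ, Nat.sub_0_r, IH by lia; ring.
Qed.

Lemma schedule_closed j : t (S (S j)) = b * (a * (b + 1) ^ j).
Proof. rewrite hrec, Nat.sub_succ, Nat.sub_0_r, schedule_sum by lia; reflexivity. Qed.

Lemma schedule_le j : t (S j) <= a * (b + 1) ^ j.
Proof. rewrite <- schedule_sum, seq_S, map_app, list_sum_app; simpl; lia. Qed.

Lemma schedule_prefix_len i : 2 <= i -> t i = a * b * (b + 1) ^ (i - 2).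
Proof.
  intro Hi; destruct i as [|[|j]]; [lia | lia |].
  rewrite schedule_closed, Nat.sub_succ, Nat.sub_succ, Nat.sub_0_r; ring.
Qed.

Lemma schedule_block_len i : 3 <= i -> t i - t (i - 1) = a * b * b * (b + 1) ^ (i - 3).
Proof.
  intro Hi; destruct i as [|[|[|k]]]; try lia.
  replace (S (S (S k)) - 1) with (S (S k)) by lia; replace (S (S (S k)) - 3) with k by lia.
  rewrite !schedule_closed, Nat.pow_succ_r'; nia.
Qed.

Hypothesis hb : 1 <= b.

Lemma schedule_growth i : 2 <= i -> a <= t i /\ b * t (i - 1) <= t i.
Proof.
  intro Hi; destruct i as [|[|j]]; try lia.
  replace (S (S j) - 1) with (S j) by lia.
  pose proof (schedule_le j); pose proof (Nat.pow_nonzero (b + 1) j ltac:(lia)).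
  rewrite schedule_closed; split; nia.
Qed.

End Schedule.

Theorem lemma4p2
  (U1 U2 : code) (hU1 : universal1 U1) (hU2 : universal2 U2)
  (x : nat -> bool) (tau sigma sigma' : R) (b : nat)
  (hrate : has_rate U1 x tau) (htau : 0 < tau)
  (hs0 : 0 < sigma) (hs1 : sigma < tau)
  (hs'0 : 0 < sigma') (hs'1 : sigma' < tau - sigma)
  (hb : INR b - 1 < (1 - sigma) / sigma' <= INR b) :
  exists a0 : nat, forall (a : nat), (a0 <= a)%nat -> (0 < a)%nat ->
  forall t : nat -> nat,
    t 0%nat = 0%nat -> t 1%nat = a ->
    (forall i, (2 <= i)%nat -> t i = (b * list_sum (map t (seq 1 (i - 1))))%nat) ->
    (forall i, (2 <= i)%nat ->
       Kc_gt U2 (seg x (t (i - 1)%nat + 1) (t i)) (seg x 1 (t (i - 1)%nat))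
             (sigma * INR (t i - t (i - 1)%nat))) /\
    (exists c1 c2 : R, exists N : nat, 0 < c1 /\ 0 < c2 /\
       forall i, (N <= i)%nat ->
         c1 * INR i <= ln (INR (length (seg x (t (i - 1)%nat + 1) (t i)))) <= c2 * INR i) /\
    (exists c1 c2 : R, exists N : nat, 0 < c1 /\ 0 < c2 /\
       forall i, (N <= i)%nat ->
         c1 * INR i <= ln (INR (length (seg x 1 (t i)))) <= c2 * INR i).
Proof.
  pose proof (rate_le_1 U1 x tau hU1 hrate).
  assert (hb1 : (1 <= b)%nat).
  { destruct b; [| lia]. assert (0 < (1 - sigma) / sigma') by (apply Rdiv_lt_0_compat; lra).
    simpl in hb; lra. }
  assert (hbs : 1 - sigma <= sigma' * INR b).
  { replace (1 - sigma) with (sigma' * ((1 - sigma) / sigma')) by (field; lra).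
    apply Rmult_le_compat_l; lra. }
  destruct (Kc_gt_of_rate U1 U2 x tau sigma sigma' hU1 hrate ltac:(lra)) as [a0 ha0].
  exists a0; intros a ha ha_pos t _ ht1 hrec; split; [| split].
  - intros i hi; destruct (schedule_growth a b t ht1 hrec hb1 i hi) as [hat hbt].
    apply ha0; [lia | nia |].
    apply le_INR in hbt; rewrite mult_INR in hbt; pose proof (pos_INR (t (i - 1)%nat)); nra.
  - apply (ln_theta_geometric _ (INR (a * b * b)) (INR (b + 1)) 3).
    + change 1 with (INR 1); apply le_INR; nia.
    + change 2 with (INR 2); apply le_INR; lia.
    + intros i hi.
      replace (length _) with (t i - t (i - 1))%nat by (rewrite seg_length; lia).
      rewrite (schedule_block_len a b t ht1 hrec) by lia.
      rewrite mult_INR, pow_INR; reflexivity.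
  - apply (ln_theta_geometric _ (INR (a * b)) (INR (b + 1)) 2).
    + change 1 with (INR 1); apply le_INR; nia.
    + change 2 with (INR 2); apply le_INR; lia.
    + intros i hi; rewrite seg_length, Nat.add_sub, (schedule_prefix_len a b t ht1 hrec) by lia.
      rewrite mult_INR, pow_INR; reflexivity.
Qed.
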